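(* Let $(V,\le,\preccurlyeq)$ be a mixed lattice vector space equipped with a vector topology $\tau$. The following are equivalent: (a) $(x,y)\mapsto x\curlyvee y$ from $V\times V$ to $V$ is uniformly continuous; (b) $(x,y)\mapsto x\curlywedge y$ from $V\times V$ to $V$ is uniformly continuous; (c) $x\mapsto {}^ux$ is uniformly continuous; (d) $x\mapsto {}^lx$ is uniformly continuous; (e) $x\mapsto |x|_{lu}$ is uniformly continuous; (f) $x\mapsto |x|_{ul}$ is uniformly continuous; (g) $x\mapsto x^l$ is uniformly continuous; (h) $x\mapsto x^u$ is uniformly continuous.
   Context: A mixed lattice vector space $(V,\le,\preccurlyeq)$ is a real vector space $V$ with two partial orderings $\le$ (initial order) and $\preccurlyeq$ (specific order), each making $V$ a partially ordered vector space, with positive cones $V_p=\{x:0\le x\}$, $V_{sp}=\{x:0\preccurlyeq x\}$, such that: (1) for all $x,y$ the elements $x\curlyvee y=\min\{w: w\succcurlyeq x,\ w\ge y\}$ and $x\curlywedge y=\max\{w: w\preccurlyeq x,\ w\le y\}$ exist (min/max with respect to $\le$); (2) $x\preccurlyeq y$ implies $x\le y$; (3) $x\curlyvee y, x\curlywedge y\in V_{sp}$ whenever $x,y\in V_{sp}$. Notation: $x^u=0\curlyvee x$, $x^l=0\curlyvee(-x)$, ${}^ux=x\curlyvee 0$, ${}^lx=(-x)\curlyvee 0$, $|x|_{ul}=x\curlyvee(-x)$, $|x|_{lu}=(-x)\curlyvee x$. A map $f:V\to V$ is uniformly continuous if for every neighborhood $W$ of $0$ there is a neighborhood $U$ of $0$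 with $x-y\in U\Rightarrow f(x)-f(y)\in W$; a map $g:V\times V\to V$ is uniformly continuous if for every neighborhood $W$ of $0$ there is a neighborhood $U$ of $0$ such that $x-x'\in U$ and $y-y'\in U$ imply $g(x,y)-g(x',y')\in W$. *)

From HB Require Import structures.
From mathcomp Require Import all_boot all_order all_algebra.
From mathcomp Require Import all_classical all_reals.
From mathcomp Require Import topology tvs.
Set Implicit Arguments. Unset Strict Implicit. Unset Printing Implicit Defensive.
Import Order.TTheory GRing.Theory Num.Theory.
Local Open Scope ring_scope.
Local Open Scope classical_set_scope.

Definition ordered_vector_order (R : realType) (V : lmodType R)
    (le : V -> V -> Prop) : Prop :=
  [/\ (forall x, le x x),
      (forall x y, le x y -> le y x -> x = y),
      (forall x y z, le x y -> le y z -> le x z),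
      (forall x y z, le x y -> le (x + z) (y + z)) &
      (forall (a : R) x y, 0 <= a -> le x y -> le (a *: x) (a *: y))].

Definition is_least {V : Type} (le : V -> V -> Prop) (S : set V) (m : V) :=
  S m /\ forall w, S w -> le m w.

Definition is_greatest {V : Type} (le : V -> V -> Prop) (S : set V) (m : V) :=
  S m /\ forall w, S w -> le w m.

(* (V, le, sle) is a mixed lattice vector space, where
   [msup x y] is x ⋎ y = min_le {w | w ≽ x, w ≥ y} and
   [minf x y] is x ⋏ y = max_le {w | w ≼ x, w ≤ y}.
   (Existence of these min/max is expressed by the given operations;
    uniqueness follows from antisymmetry of le.) *)
Definition mixed_lattice_vector_space (R : realType) (V : lmodType R)
    (le sle : V -> V -> Prop) (msup minf : V -> V -> V) : Prop :=
  ordered_vector_order le /\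
  ordered_vector_order sle /\
  (forall x y, is_least le [set w | sle x w /\ le y w] (msup x y)) /\
  (forall x y, is_greatest le [set w | sle w x /\ le w y] (minf x y)) /\
  (forall x y, sle x y -> le x y) /\
  (forall x y, sle 0 x -> sle 0 y -> sle 0 (msup x y) /\ sle 0 (minf x y)).

Definition unif_cont1 (R : realType) (V : topologicalLmodType R) (f : V -> V) :=
  forall W : set V, nbhs (0 : V) W ->
    exists U : set V, nbhs (0 : V) U /\
      forall x y, U (x - y) -> W (f x - f y).

Definition unif_cont2 (R : realType) (V : topologicalLmodType R)
    (g : V -> V -> V) :=
  forall W : set V, nbhs (0 : V) W ->
    exists U : set V, nbhs (0 : V) U /\
      forall x y x' y', U (x - x') -> U (y - y') -> W (g x y - g x' y').

From HB Require Import structures.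
From mathcomp Require Import all_boot all_order all_algebra.
From mathcomp Require Import all_classical all_reals.
From mathcomp Require Import topology tvs.
Set Implicit Arguments. Unset Strict Implicit. Unset Printing Implicit Defensive.
Import Order.TTheory GRing.Theory Num.Theory.
Local Open Scope ring_scope.
Local Open Scope classical_set_scope.

(* Translation invariance gives [x ⋎ y = x + (0 ⋎ (y - x))], and reversing both
   orders by [x |-> -x] gives [x ⋏ y = - ((-x) ⋎ (-y))].  Hence each of the
   unary maps is an affine reparametrisation [x |-> a x + (c x)^u] (c <> 0)
   of [x |-> x^u], and the binary ones are [(x, y) |-> x + (y - x)^u] and its
   conjugate by [x |-> -x].  Uniform
   continuity survives such substitutions because addition and scalar
   multiplication are continuous at 0. *)

Section TopologicalLmoduleNbhs0.
Variables (R : numDomainType) (V : topologicalLmodType R).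

Lemma nbhs0_add_split (W : set V) : nbhs (0 : V) W ->
  exists2 W1 : set V, nbhs (0 : V) W1 & forall a b, W1 a -> W1 b -> W (a + b).
Proof.
move=> W0; have := @add_continuous V (0, 0).
rewrite /continuous_at /= addr0 => /(_ W W0)[[A B] /= [A0 B0] AB].
exists (A `&` B); first exact: filterI.
by move=> a b [Aa _] [_ Bb]; exact: (AB (a, b)).
Qed.

Lemma nbhs0_scale (U : set V) (c : R) :
  nbhs (0 : V) U -> nbhs (0 : V) (fun v => U (c *: v)).
Proof.
move=> U0; have := @scale_continuous R V (c, 0).
rewrite /continuous_at /= scaler0 => /(_ U U0)[[A B] /= [A0 B0] AB].
apply: filterS B0 => v Bv; apply: (AB (c, v)); split => //=.
exact: nbhs_singleton A0.
Qed.

End TopologicalLmoduleNbhs0.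

Section UniformContinuity.
Variables (R : realType) (V : topologicalLmodType R).
Implicit Types (f g h : V -> V) (a c : R).

Lemma eq_unif_cont1 f g : f =1 g -> unif_cont1 f -> unif_cont1 g.
Proof.
move=> fg uf W W0; have [U [U0 HU]] := uf W W0.
by exists U; split=> // x y Uxy; rewrite -!fg; exact: HU.
Qed.

Lemma unif_cont1_comp_scale f c : unif_cont1 f -> unif_cont1 (fun x => f (c *: x)).
Proof.
move=> uf W W0; have [U [U0 HU]] := uf W W0.
exists (fun v => U (c *: v)); split; first exact: nbhs0_scale.
by move=> x y Uxy; apply: HU; rewrite -scalerBr.
Qed.

Lemma unif_cont1_add_scale f a : unif_cont1 f -> unif_cont1 (fun x => a *: x + f x).
Proof.
move=> uf W W0; have [W1 W10 HW1] := nbhs0_add_split W0.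
have [U [U0 HU]] := uf W1 W10.
exists (U `&` (fun v => W1 (a *: v))); split; first exact: filterI (nbhs0_scale a W10).
move=> x y [Uxy Wxy].
rewrite opprD addrACA -scalerBr addrC.
exact: HW1 (HU _ _ Uxy) Wxy.
Qed.

Lemma unif_cont1_affine h f a c : c != 0 ->
  h =1 (fun x => a *: x + f (c *: x)) -> (unif_cont1 h <-> unif_cont1 f).
Proof.
move=> c0 hE; split=> uc; last first.
  by apply: eq_unif_cont1 (fun x => esym (hE x)) _; exact/unif_cont1_add_scale/unif_cont1_comp_scale.
apply: (@eq_unif_cont1 (fun x => - (a / c) *: x + h (c^-1 *: x))).
  move=> x; rewrite hE !scalerA divff // scale1r addrA -scalerDl.
  by rewrite addNr scale0r add0r.
exact/unif_cont1_add_scale/unif_cont1_comp_scale.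
Qed.

Lemma unif_cont2_opp_conj (g1 g2 : V -> V -> V) :
  (forall x y, g2 x y = - g1 (- x) (- y)) -> unif_cont2 g1 -> unif_cont2 g2.
Proof.
move=> gE ug W W0; have [U [U0 HU]] := ug _ (nbhs0_scale (-1) W0).
exists (fun v => U ((-1) *: v)); split; first exact: nbhs0_scale.
have oppBE (u v : V) : - u - - v = (-1) *: (u - v).
  by rewrite scaleN1r opprB opprK addrC.
by move=> x y x' y' Ux Uy; rewrite !gE oppBE; apply: HU; rewrite oppBE.
Qed.

Lemma unif_cont2_translation (g : V -> V -> V) :
  (forall x y, g x y = x + g 0 (y - x)) -> (unif_cont2 g <-> unif_cont1 (g 0)).
Proof.
move=> gE; split=> ug W W0.
  have [U [U0 HU]] := ug W W0; exists U; split=> // x y Uxy.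
  by apply: HU => //; rewrite subr0; exact: nbhs_singleton U0.
have [W1 W10 HW1] := nbhs0_add_split W0.
have [U1 [U10 HU1]] := ug W1 W10.
have [U2 U20 HU2] := nbhs0_add_split U10.
exists (W1 `&` (U2 `&` (fun v => U2 ((-1) *: v)))); split.
  by apply: filterI => //; apply: filterI => //; exact: nbhs0_scale.
move=> x y x' y' [Wx [_ Unx]] [_ [Uy _]].
rewrite (gE x) (gE x') opprD addrACA; apply: HW1 => //; apply: HU1.
have -> : y - x - (y' - x') = (y - y') + (-1) *: (x - x').
  by rewrite scaleN1r !opprB addrACA [RHS]addrACA [- y' + _]addrC.
exact: HU2.
Qed.

End UniformContinuity.

Section OrderedVectorSpace.
Variables (R : realType) (V : lmodType R) (le : V -> V -> Prop).
Hypothesis ovo : ordered_vector_order le.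

Lemma ordered_vector_order_addr2 x y z : le (x + z) (y + z) <-> le x y.
Proof.
have [_ _ _ le_add _] := ovo; split=> [|/(le_add _ _ z)//].
by move=> /(le_add _ _ (- z)); rewrite !addrK.
Qed.

Lemma ordered_vector_order_opp x y : le x y -> le (- y) (- x).
Proof.
rewrite -(ordered_vector_order_addr2 _ _ (- x - y)).
by rewrite addrA subrr add0r addrCA subrr addr0.
Qed.

End OrderedVectorSpace.

Section MixedLattice.
Variables (R : realType) (V : lmodType R) (le sle : V -> V -> Prop).
Variables (msup minf : V -> V -> V).
Hypothesis HV : mixed_lattice_vector_space le sle msup minf.

Lemma msupDr x y z : msup (x + z) (y + z) = msup x y + z.
Proof.
have [ovo [sovo [Hsup _]]] := HV; have [_ le_anti _ _ _] := ovo.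
have [[sxy lxy] least_xy] := Hsup x y.
have [[sxyz lxyz] least_xyz] := Hsup (x + z) (y + z).
apply: le_anti.
  by apply: least_xyz; split; [apply/(ordered_vector_order_addr2 sovo) | apply/(ordered_vector_order_addr2 ovo)].
rewrite -(ordered_vector_order_addr2 ovo _ _ (- z)) addrK; apply: least_xy; split.
  by apply/(ordered_vector_order_addr2 sovo _ _ z); rewrite subrK.
by apply/(ordered_vector_order_addr2 ovo _ _ z); rewrite subrK.
Qed.

Lemma msupE x y : msup x y = x + msup 0 (y - x).
Proof. by rewrite addrC -msupDr add0r subrK. Qed.

Lemma minfE x y : minf x y = - msup (- x) (- y).
Proof.
have [ovo [sovo [Hsup [Hinf _]]]] := HV; have [_ le_anti _ _ _] := ovo.
have [[sinf linf] greatest_inf] := Hinf x y.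
have [[ssup lsup] least_sup] := Hsup (- x) (- y).
apply: le_anti.
  rewrite -[minf x y]opprK; apply: (ordered_vector_order_opp ovo); apply: least_sup.
  by split; [exact: (ordered_vector_order_opp sovo sinf) | exact: (ordered_vector_order_opp ovo linf)].
apply: greatest_inf; split.
  by have := ordered_vector_order_opp sovo ssup; rewrite opprK.
by have := ordered_vector_order_opp ovo lsup; rewrite opprK.
Qed.

End MixedLattice.

Theorem proposition3p3 (R : realType) (V : topologicalLmodType R)
    (le sle : V -> V -> Prop) (msup minf : V -> V -> V)
    (HV : mixed_lattice_vector_space le sle msup minf) :
  let xu  := fun x : V => msup 0 x in          (* x^u   = 0 ⋎ x      *)
  let xl  := fun x : V => msup 0 (- x) in      (* x^l   = 0 ⋎ (-x)   *)
  let ux  := fun x : V => msup x 0 in          (* ^u x  = x ⋎ 0      *)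
  let lx  := fun x : V => msup (- x) 0 in      (* ^l x  = (-x) ⋎ 0   *)
  let aul := fun x : V => msup x (- x) in      (* |x|_ul = x ⋎ (-x)  *)
  let alu := fun x : V => msup (- x) x in      (* |x|_lu = (-x) ⋎ x  *)
  (unif_cont2 msup <-> unif_cont2 minf) /\
      (unif_cont2 minf <-> unif_cont1 ux) /\
      (unif_cont1 ux <-> unif_cont1 lx) /\
      (unif_cont1 lx <-> unif_cont1 alu) /\
      (unif_cont1 alu <-> unif_cont1 aul) /\
      (unif_cont1 aul <-> unif_cont1 xl) /\
      (unif_cont1 xl <-> unif_cont1 xu).
Proof.
move=> xu xl ux lx aul alu.
have supE := msupE HV; have infE := minfE HV.
have Psup : unif_cont2 msup <-> unif_cont1 xu := unif_cont2_translation supE.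
have Pinf : unif_cont2 minf <-> unif_cont2 msup.
  by split; apply: unif_cont2_opp_conj => // x y; rewrite infE !opprK.
have Pux : unif_cont1 ux <-> unif_cont1 xu.
  apply: (@unif_cont1_affine _ _ _ _ 1 (-1)) => [|x]; first by rewrite oppr_eq0 oner_eq0.
  by rewrite /ux supE scale1r scaleN1r sub0r.
have Plx : unif_cont1 lx <-> unif_cont1 xu.
  apply: (@unif_cont1_affine _ _ _ _ (-1) 1) => [|x]; first by rewrite oner_eq0.
  by rewrite /lx supE scaleN1r scale1r sub0r opprK.
have Palu : unif_cont1 alu <-> unif_cont1 xu.
  apply: (@unif_cont1_affine _ _ _ _ (-1) 2%:R) => [|x]; first by rewrite pnatr_eq0.
  by rewrite /alu supE scaleN1r scaler_nat mulr2n opprK.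
have Paul : unif_cont1 aul <-> unif_cont1 xu.
  apply: (@unif_cont1_affine _ _ _ _ 1 (- 2%:R)) => [|x]; first by rewrite oppr_eq0 pnatr_eq0.
  by rewrite /aul supE scale1r scaleNr scaler_nat mulr2n opprD.
have Pxl : unif_cont1 xl <-> unif_cont1 xu.
  apply: (@unif_cont1_affine _ _ _ _ 0 (-1)) => [|x]; first by rewrite oppr_eq0 oner_eq0.
  by rewrite /xl scale0r add0r scaleN1r.
by move: Pinf Psup Pux Plx Palu Paul Pxl; clear; tauto.
Qed.
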